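(* Let $n=p_1^{\alpha_1}p_2^{\alpha_2}\cdots p_r^{\alpha_r}$, where $r\geq 2$, $\alpha_1,\ldots,\alpha_r$ are positive integers and $p_1<p_2<\cdots<p_r$ are primes. Let $m=p_{k_1}^{\beta_{k_1}}p_{k_2}^{\beta_{k_2}}\cdots p_{k_s}^{\beta_{k_s}}$, where $2\leq s\leq r$, $k_1<k_2<\cdots<k_s$ and $1\leq\beta_{k_i}\leq\alpha_{k_i}$ for $1\leq i\leq s$. Suppose that at least one of the following holds: (i) $2\phi(p_1p_2\cdots p_r)\geq p_1p_2\cdots p_r$; (ii) $\phi(p_{j+1})\geq r\,\phi(p_j)$ for each $j\in\{1,2,\ldots,r-1\}$. Then $\deg(m)>\deg(m/p_{k_i})$ in $\mathcal{P}(C_n)$ for every $i\in\{1,2,\ldots,s-1\}$.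
   Context: For a finite group $G$, the power graph $\mathcal{P}(G)$ is the simple undirected graph with vertex set $G$ in which two distinct vertices are adjacent if one is an integral power of the other. $C_n$ denotes the cyclic group of order $n$, identified with $\mathbb{Z}_n=\{0,1,\ldots,n-1\}$, so a positive divisor $d$ of $n$ is regarded as the element $d\bmod n\in\mathbb{Z}_n$. $\deg(a)$ is the degree of vertex $a$ in $\mathcal{P}(C_n)$ and $\phi$ is Euler's totient function. *)

From mathcomp Require Import all_boot all_order all_algebra all_fingroup all_solvable.
Set Implicit Arguments. Unset Strict Implicit. Unset Printing Implicit Defensive.

(* The cyclic group C_n is the additive group 'Z_n (= 'I_n for n >= 2),
   whose finGroupType structure is addition mod n; so x ^+ k is k*x mod n
   and <[x]> is the set of all integral "powers" (multiples) of x. *)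

Definition pg_adj (n : nat) (a b : 'Z_n) : bool :=
  (a != b) && ((a \in <[b]>%g) || (b \in <[a]>%g)).

Definition pg_deg (n d : nat) : nat :=
  #|[set b : 'Z_n | pg_adj (inZp d) b]|.

From mathcomp Require Import all_boot all_order all_algebra all_fingroup all_solvable.
From mathcomp Require Import zify.
Set Implicit Arguments. Unset Strict Implicit. Unset Printing Implicit Defensive.

(* In C_n two elements x, y are adjacent iff ord y | ord x or ord x | ord y, so
   deg(x) + 1 = #|A(ord x)| with A(o) := {y | ord y | o or o | ord y}.  If m | n
   then m has order d := n/m and m/p has order dp.  Passing from A(dp) to A(d)
   one loses at least the phi(dq) elements of order dq (q another prime of m)
   and gains only elements whose order divides dp, is not dp and does not
   divide d, i.e. at most dp - phi(dp) - d of them.  Hence deg(m/p) < deg(m)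
   follows from the arithmetic inequality
             d p < phi(d q) + phi(d p) + d.                       (KEY)
   Since phi(d l) is l phi(d) or (l-1) phi(d), (KEY) reduces to an upper bound
   on d / phi(d) = prod_{l | d} l/(l-1):
   - under (i), d/phi(d) <= n0/phi(n0) <= 2, n0 the product of the primes of n;
   - under (ii), d/phi(d) <= omega(d) + 1 because the k-th smallest prime
     factor is at least k + 1, while (ii) gives r (p-1) <= q-1 for p < q. *)

Lemma totient_prod_distinct_primes (s : seq nat) : uniq s -> all prime s ->
  totient (\prod_(l <- s) l) = \prod_(l <- s) l.-1.
Proof.
elim: s => [|l s IH] /=; first by rewrite !big_nil.
case/andP=> ls us /andP[pl ps]; rewrite !big_cons totient_coprime.
  by rewrite totient_prime // IH.
rewrite prime_coprime // Euclid_dvd_prod // big_has; apply/hasPn => x xs /=.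
by rewrite dvdn_prime2 ?(allP ps x xs) //; apply: contraNneq ls => ->.
Qed.

(* The product formula phi(d) = d prod_{p | d} (1 - 1/p), without fractions. *)
Lemma totient_prod_primes d : 0 < d ->
  totient d * \prod_(p <- primes d) p = d * \prod_(p <- primes d) p.-1.
Proof.
move=> d0; have := prod_prime_decomp d0; rewrite prime_decompE big_map /= => dE.
rewrite totientE // -big_split [X in _ = X * _]dE -big_split /= !big_seq.
apply: eq_bigr => p; rewrite -logn_gt0 => e0.
by rewrite -mulnA -expnSr prednK // mulnC.
Qed.

Lemma prod_pred_gt0 (s : seq nat) : all prime s -> 0 < \prod_(l <- s) l.-1.
Proof.
move=> ps; rewrite big_seq prodn_cond_gt0 // => l /(allP ps)/prime_gt1.
by case: l => [|[]].
Qed.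

(* prod_{l in t} l/(l-1) <= prod_{l in s} l/(l-1) when t is contained in s,
   as every factor is at least 1. *)
Lemma prod_ratio_subset (t s : seq nat) : uniq t -> uniq s -> {subset t <= s} ->
  (\prod_(l <- t) l) * \prod_(l <- s) l.-1 <= (\prod_(l <- s) l) * \prod_(l <- t) l.-1.
Proof.
move=> ut us ts.
have pt : perm_eq [seq l <- s | l \in t] t.
  apply: uniq_perm => //; first exact: filter_uniq.
  by move=> x; rewrite mem_filter andb_idr //; apply: ts.
have ps : perm_eq ([seq l <- s | l \in t] ++ [seq l <- s | l \notin t]) s.
  by rewrite perm_filterC.
rewrite -[\prod_(l <- s) _.-1](perm_big _ ps) -[\prod_(l <- s) _](perm_big _ ps).
rewrite !big_cat !(perm_big _ pt) /= -mulnA [X in _ <= _ * X]mulnC.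
by rewrite leq_mul // leq_mul // leq_prod // => l _; exact: leq_pred.
Qed.

(* For a strictly increasing list of numbers all >= c+2, the i-th entry is at
   least c+2+i, so prod l/(l-1) telescopes below (size s + c + 1)/(c + 1). *)
Lemma prod_ratio_sorted (s : seq nat) c : {in s, forall x, c.+2 <= x} ->
  sorted ltn s ->
  (\prod_(x <- s) x) * c.+1 <= (size s + c).+1 * \prod_(x <- s) x.-1.
Proof.
elim: s c => [|l s IH] c hs srt; first by rewrite !big_nil /=; lia.
rewrite !big_cons /=.
have hl : c.+2 <= l by apply: hs; rewrite inE eqxx.
have hs' : {in s, forall x, c.+3 <= x}.
  move=> x xs; have /allP/(_ x xs) := order_path_min ltn_trans srt.
  by have := hl; rewrite /=; lia.
have := IH c.+1 hs' (path_sorted srt).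
set A := \prod_(_ <- _) _; set B := \prod_(_ <- _) _.-1 => hAB.
have hlc : l * c.+1 <= l.-1 * c.+2 by lia.
rewrite -(leq_pmul2r (ltn0Sn c.+1)).
have := leq_mul hlc hAB.
rewrite addSnnS; nia.
Qed.

Lemma totient_ratio_le d (s : seq nat) : 0 < d -> uniq s -> {subset primes d <= s} ->
  d * \prod_(l <- s) l.-1 <= totient d * \prod_(l <- s) l.
Proof.
move=> d0 us sub; have Qd0 := prod_pred_gt0 (all_prime_primes d).
rewrite -(leq_pmul2r Qd0) mulnAC -totient_prod_primes // -!mulnA leq_mul2l.
by rewrite prod_ratio_subset ?primes_uniq ?orbT.
Qed.

Lemma totient_omega_bound d : 0 < d -> d <= totient d * (size (primes d)).+1.
Proof.
move=> d0; have Qd0 := prod_pred_gt0 (all_prime_primes d).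
have gt1 : {in primes d, forall p, 1 < p}.
  by move=> p; rewrite mem_primes => /andP[/prime_gt1].
have := prod_ratio_sorted gt1 (sorted_primes d); rewrite muln1 addn0 => hP.
rewrite -(leq_pmul2r Qd0) -totient_prod_primes // -mulnA leq_mul2l.
by rewrite hP orbT.
Qed.

(* d/phi(d) <= 2, the bound used under hypothesis (i): s lists the primes of
   n and their product n0 satisfies n0 <= 2 phi(n0). *)
Lemma totient_half_bound d (s : seq nat) : 0 < d -> uniq s -> all prime s ->
  {subset primes d <= s} -> \prod_(l <- s) l <= 2 * totient (\prod_(l <- s) l) ->
  d <= 2 * totient d.
Proof.
move=> d0 us ps sub; rewrite totient_prod_distinct_primes // => hs.
rewrite -(leq_pmul2r (prod_pred_gt0 ps)) (leq_trans (totient_ratio_le d0 us sub)) //.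
by rewrite -mulnA mulnCA leq_mul2l hs orbT.
Qed.

Lemma totient_mul_prime d l : prime l -> 0 < d ->
  totient (d * l) = (if l %| d then l else l.-1) * totient d.
Proof.
move=> pl d0; have l0 := prime_gt0 pl; case: ifP => ld; last first.
  rewrite totient_coprime ?(totient_prime pl) 1?mulnC // coprime_sym.
  by rewrite prime_coprime ?ld.
have same : primes (d * l) = primes d.
  apply/eq_primes => p; rewrite primesM // (primes_prime pl) inE orb_idr //.
  by move/eqP->; rewrite mem_primes pl d0.
have P0 : 0 < \prod_(p <- primes d) p.
  by rewrite big_seq prodn_cond_gt0 // => p; rewrite mem_primes => /andP[/prime_gt0].
apply/eqP; rewrite -(eqn_pmul2r P0) -{1}same.
rewrite (totient_prod_primes (d := d * l)) ?muln_gt0 ?d0 // same.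
by rewrite -[l * _ * _]mulnA (totient_prod_primes d0) mulnCA mulnA.
Qed.

Lemma totient_mul_prime_ge d l : prime l -> 0 < d -> l.-1 * totient d <= totient (d * l).
Proof.
move=> pl d0; rewrite totient_mul_prime //.
by case: ifP => // _; rewrite leq_mul2r leq_pred orbT.
Qed.

(* (KEY) when d <= 2 phi(d): then d (p-1) <= 2 phi(d) (p-1) < phi(dq) + phi(dp). *)
Lemma key_ineq_small_ratio d p q : prime p -> prime q -> p < q -> 0 < d ->
  d <= 2 * totient d -> d * p < totient (d * q) + totient (d * p) + d.
Proof.
move=> pp qq pq d0 hd.
have := totient_mul_prime_ge pp d0; have := totient_mul_prime_ge qq d0.
have := totient_gt0 d; have := prime_gt1 pp; rewrite d0; nia.
Qed.

Lemma omega_bound_sub d q (s : seq nat) : uniq s -> q \in s ->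
  {subset primes d <= s} -> (size (primes d)).+1 <= size s + (q %| d).
Proof.
move=> us qs sub; case: (boolP (q %| d)) => qd.
  by rewrite addn1 ltnS uniq_leq_size ?primes_uniq.
have sub_rem : {subset primes d <= rem q s}.
  move=> l ld; rewrite mem_rem_uniq // inE sub // andbT.
  by apply: contraNneq qd => <-; move: ld; rewrite mem_primes => /and3P[].
have s0 : 0 < size s by case: (s) qs.
by rewrite addn0 -(prednK s0) ltnS -(size_rem qs) uniq_leq_size ?primes_uniq.
Qed.

(* (KEY) under (ii): with r := size s and r (p-1) <= q-1,
   d (p-1) <= phi(d) (r + [q | d]) (p-1) <= phi(d) (q-1) + [q | d] phi(d) (p-1),
   which is below phi(dq) + phi(dp) since phi(dq) = q phi(d) when q | d. *)
Lemma key_ineq_few_primes d p q (s : seq nat) : prime p -> prime q -> 0 < d ->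
  uniq s -> q \in s -> {subset primes d <= s} -> size s * p.-1 <= q.-1 ->
  d * p < totient (d * q) + totient (d * p) + d.
Proof.
move=> pp qq d0 us qs sub hpq.
have hd : d * p.-1 <= totient d * (size s + (q %| d)) * p.-1.
  rewrite leq_mul2r (leq_trans (totient_omega_bound d0)) ?orbT //.
  by rewrite leq_mul2l omega_bound_sub ?orbT.
have hq : totient d * size s * p.-1 <= totient d * q.-1.
  by rewrite -mulnA leq_mul2l hpq orbT.
have t0 : 0 < totient d by rewrite totient_gt0.
have hp := totient_mul_prime_ge pp d0.
have dp : d * p = d * p.-1 + d by rewrite -mulnSr prednK ?prime_gt0.
have tq : q * totient d = totient d * q.-1 + totient d.
  by rewrite mulnC -mulnSr prednK ?prime_gt0.
have p1 : 0 < p.-1 by rewrite -subn1 subn_gt0 prime_gt1.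
rewrite (totient_mul_prime qq d0) [X in X < _]dp.
(* Once p-1, q-1 and the totients are abstracted, this is linear arithmetic. *)
case: (q %| d) hd; rewrite /= ?addn1 ?addn0 => hd; move: hd hq hp tq t0 p1;
  move: (p.-1) (q.-1) (totient d) (totient (d * p)) => p' q' t tp; nia.
Qed.

(* Hypothesis (ii) for the sorted prime list s yields r (p-1) <= q-1 for all
   p < q in s: the successor p' of p in s satisfies p' <= q. *)
Lemma chain_gap (s : seq nat) r p q : sorted ltn s -> all prime s ->
  (forall j, j.+1 < size s -> r * totient (nth 0 s j) <= totient (nth 0 s j.+1)) ->
  p \in s -> q \in s -> p < q -> r * p.-1 <= q.-1.
Proof.
move=> lt_s ps chain p_s q_s pq.
have le_s : sorted leq s := sub_sorted (fun x y => @ltnW x y) lt_s.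
set a := index p s; set b := index q s.
have ab : a < b.
  rewrite ltnNge; apply/negP => /(sorted_leq_index leq_trans leqnn le_s _ _ q_s p_s).
  by rewrite leqNgt pq.
have a1s : a.+1 < size s by rewrite (leq_ltn_trans ab) ?index_mem.
have next_le : nth 0 s a.+1 <= q.
  rewrite -(nth_index 0 q_s); apply: (sorted_leq_nth leq_trans leqnn 0 le_s) => //.
  by rewrite inE index_mem.
have := chain a a1s.
rewrite nth_index // !totient_prime ?(allP ps) ?mem_nth //.
by move/leq_trans; apply; rewrite -!subn1 leq_sub2r.
Qed.

Section CyclicGroupCounting.
Local Open Scope group_scope.
Variables (gT : finGroupType) (g : gT).
Hypothesis gen_g : <[g]> = [set: gT].

Lemma cyclic_setT : cyclic [set: gT].
Proof. by rewrite -gen_g cycle_cyclic. Qed.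

Lemma mem_cycle_order (x y : gT) : (y \in <[x]>) = (#[y] %| #[x])%N.
Proof. by rewrite -cycle_subG /order (cardSg_cyclic cyclic_setT) ?subsetT. Qed.

(* The closed neighbourhood of an element of order o in the power graph. *)
Definition order_comparable (o : nat) : {set gT} :=
  [set y | (#[y] %| o) || (o %| #[y])]%N.

Lemma order_expg_div k : (k %| #[g])%N -> #[g ^+ (#[g] %/ k)] = k.
Proof.
move=> kg; rewrite orderXdiv ?dvdn_div // divnA // mulKn //; exact: order_gt0.
Qed.

Lemma card_order_dvd k : (k %| #[g])%N -> #|[set y : gT | #[y] %| k]%N| = k.
Proof.
move=> kg; have ok := order_expg_div kg.
by rewrite -{2}ok /order; apply: eq_card => y; rewrite inE mem_cycle_order ok.
Qed.

Lemma card_order_eq k : (k %| #[g])%N -> #|[set y : gT | #[y] == k]| = totient k.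
Proof.
move=> kg; have ok := order_expg_div kg.
rewrite -{2}ok totient_gen; apply: eq_card => y; rewrite !inE /generator.
by rewrite (eq_subG_cyclic cyclic_setT) ?subsetT // -!/(order _) ok eq_sym.
Qed.

Lemma card_neighbours (x : gT) :
  #|[set b | (x != b) && ((x \in <[b]>) || (b \in <[x]>))]|.+1 =
  #|order_comparable #[x]|.
Proof.
rewrite [RHS](cardsD1 x) inE dvdnn add1n; congr _.+1; apply: eq_card => b.
by rewrite !inE !mem_cycle_order eq_sym orbC.
Qed.

(* The counting argument: A(d) \ A(dp) contains the phi(dq) elements of order
   dq, while A(dp) \ A(d), the elements of order dp and those of order dividing
   d are disjoint sets of elements of order dividing dp. *)
Lemma card_order_comparable_lt d p q : prime p -> prime q -> p != q ->
  (d * p %| #[g])%N -> (d * q %| #[g])%N ->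
  (d * p < totient (d * q) + totient (d * p) + d)%N ->
  (#|order_comparable (d * p)| < #|order_comparable d|)%N.
Proof.
move=> pp pq npq dpg dqg key.
have d0 : (0 < d)%N by move: (dvdn_gt0 (order_gt0 g) dpg); rewrite muln_gt0 => /andP[].
have d_dp : (d %| d * p)%N := dvdn_mulr p (dvdnn d).
have dg : (d %| #[g])%N := dvdn_trans d_dp dpg.
set Ad := order_comparable d; set Ap := order_comparable (d * p).
set Ddp := [set y : gT | #[y] %| d * p]%N; set Edp := [set y : gT | #[y] == (d * p)%N].
set Dd := [set y : gT | #[y] %| d]%N.
have lost : (totient (d * q) <= #|Ad :\: Ap|)%N.
  rewrite -card_order_eq //; apply: subset_leq_card; apply/subsetP => y.
  rewrite !inE => /eqP ->; rewrite (dvdn_mulr q (dvdnn d)) orbT andbT.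
  by rewrite !dvdn_pmul2l // !dvdn_prime2 // eq_sym negb_or npq.
have EDdisj : [disjoint Edp & Dd].
  apply/pred0P => y; rewrite /= !inE; apply/negP => /andP[/eqP -> dpd].
  by move: (dvdn_leq d0 dpd); rewrite -{2}[d]muln1 leq_pmul2l // leqNgt prime_gt1.
have gainedDisj : [disjoint Ap :\: Ad & Edp :|: Dd].
  apply/pred0P => y; rewrite /= !inE negb_or; apply/negP.
  case/andP=> /andP[/andP[nd ndy] _] /orP[/eqP yo | yd]; last by rewrite yd in nd.
  by rewrite yo d_dp in ndy.
have gainedSub : Ap :\: Ad :|: (Edp :|: Dd) \subset Ddp.
  apply/subsetP => y; rewrite !inE => /orP[/andP[/norP[_ ndy]] /orP[//|dpy]|].
    by case/negP: ndy; apply: dvdn_trans dpy.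
  by case/orP => [/eqP->|yd]; [exact: dvdnn | exact: dvdn_trans d_dp].
have cardU (A B : {set gT}) : [disjoint A & B] -> #|A :|: B| = (#|A| + #|B|)%N.
  by move=> AB; apply/eqP; rewrite (leq_card_setU A B).2.
have := subset_leq_card gainedSub.
rewrite !cardU // /Edp /Dd /Ddp card_order_eq // !card_order_dvd //.
have splitA := cardsID Ap Ad; have splitD := cardsID Ad Ap; rewrite setIC in splitD.
lia.
Qed.
End CyclicGroupCounting.

Lemma order_inZp N k : k %| N.+2 -> #[inZp k : 'Z_N.+2]%g = N.+2 %/ k.
Proof.
move=> kn; have -> : (inZp k : 'Z_N.+2) = (Zp1 ^+ k)%g.
  by rewrite Zp_expg; apply: val_inj; rewrite /= mul1n.
by rewrite orderXdiv order_Zp1.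
Qed.

Lemma pg_deg_succ N k : k %| N.+2 ->
  (pg_deg N.+2 k).+1 = #|@order_comparable ('Z_(N.+2)) (N.+2 %/ k)|.
Proof.
move=> kn; rewrite -order_inZp // -(card_neighbours (g := Zp1)) //.
exact/esym/Zp_cycle.
Qed.

Lemma pg_deg_lt N d m p q : d * m = N.+2 -> prime p -> prime q -> p != q ->
  p %| m -> q %| m -> d * p < totient (d * q) + totient (d * p) + d ->
  pg_deg N.+2 (m %/ p) < pg_deg N.+2 m.
Proof.
move=> dm pp pq npq pm qm key.
have m0 : 0 < m by move: (ltn0Sn N.+1); rewrite -dm muln_gt0 => /andP[].
have m_p0 : 0 < m %/ p by rewrite divn_gt0 ?(prime_gt0 pp) ?(dvdn_leq m0 pm).
have e1 : d * m %/ m = d by rewrite mulnK.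
have e2 : d * m %/ (m %/ p) = d * p by rewrite -{1}(divnK pm) mulnA mulnAC mulnK.
have mn : m %| d * m := dvdn_mull d (dvdnn m).
have m_pn : m %/ p %| d * m := dvdn_trans (dvdn_div pm) mn.
rewrite dm in e1 e2 mn m_pn.
have dlg l : l %| m -> d * l %| #[Zp1 : 'Z_(N.+2)]%g.
  by move=> lm; rewrite order_Zp1 -dm dvdn_mul.
rewrite -ltnS (pg_deg_succ m_pn) (pg_deg_succ mn) e1 e2.
apply: (card_order_comparable_lt _ pp pq npq (dlg p pm) (dlg q qm) key).
exact/esym/Zp_cycle.
Qed.

Lemma primes_dvd_sub k n : 0 < n -> k %| n -> {subset primes k <= primes n}.
Proof.
by move=> n0 kn p; rewrite !mem_primes => /and3P[-> _ pk]; rewrite n0 (dvdn_trans pk kn).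
Qed.

Theorem proposition4p1 (n m : nat) :
  2 <= size (primes n) ->
  0 < m -> m %| n -> 2 <= size (primes m) ->
  (2 * totient (\prod_(p <- primes n) p) >= \prod_(p <- primes n) p
   \/ (forall j, j.+1 < size (primes n) ->
         totient (nth 0 (primes n) j.+1) >=
           size (primes n) * totient (nth 0 (primes n) j))) ->
  forall i, i.+1 < size (primes m) ->
    pg_deg n m > pg_deg n (m %/ nth 0 (primes m) i).
Proof.
move=> r2 m0 mn sm2 hyp i hi.
have n1 : 1 < n by rewrite ltnNge -ltnS -primes_eq0; apply: contraTN r2 => /eqP ->.
have n0 : 0 < n := ltnW n1.
set p := nth 0 (primes m) i; set q := nth 0 (primes m) i.+1.
have pm : p \in primes m := mem_nth 0 (ltnW hi).
have qm : q \in primes m := mem_nth 0 hi.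
have pq : p < q.
  by apply: (sorted_ltn_nth ltn_trans 0 (sorted_primes m)); rewrite ?inE ?(ltnW hi).
move: (pm) (qm); rewrite !mem_primes => /and3P[pp _ pdm] /and3P[qq _ qdm].
set d := n %/ m; have dmn : d * m = n := divnK mn.
have d0 : 0 < d by rewrite divn_gt0 // dvdn_leq.
have dn : {subset primes d <= primes n} := primes_dvd_sub n0 (dvdn_div mn).
have key : d * p < totient (d * q) + totient (d * p) + d.
  case: hyp => [half | chain].
    apply: (key_ineq_small_ratio pp qq pq d0).
    exact: totient_half_bound d0 (primes_uniq n) (all_prime_primes n) dn half.
  have [pn qn] := (primes_dvd_sub n0 mn pm, primes_dvd_sub n0 mn qm).
  apply: (key_ineq_few_primes pp qq d0 (primes_uniq n) qn dn).
  exact: chain_gap (sorted_primes n) (all_prime_primes n) chain pn qn pq.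
have [N defN] : exists N, n = N.+2 by exists n.-2; lia.
rewrite defN in dmn *; apply: (pg_deg_lt dmn pp qq _ pdm qdm key).
by rewrite neq_ltn pq.
Qed.
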